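(* Let $d\ge2$, $n\ge1$, $d\le t\le dn$, let $\gamma$ be a positive conductivity on the lattice graph below, fix $p\in L_t$, and let $M_p=\mathcal N(p)\cap(J_{t-1}^{\mathcal S}\cup L_{t-1}^{\mathcal S})$. Suppose $\mathbf u\in\mathbb R^{L_t^{\mathcal S}\cup J_{t-1}^{\mathcal S}}$ satisfies $\mathbf u_p=0$, $\sum_{q\in\mathcal N(r)}\gamma_{rq}(\mathbf u_q-\mathbf u_r)=0$ for all $r\in L_{t-1}^{\mathcal S}\setminus M_p$, $\mathbf u=0$ on $J_{t-1}^{\mathcal S}$, and $\gamma_{bq_b}(\mathbf u_{q_b}-\mathbf u_b)=0$ for all $b\in J_{t-1}^{\mathcal S}$. Then $\mathbf u=0$.
   Context: Lattice: $D=\{x\in\mathbb Z^d:1\le x_i\le n\ \forall i\}$, $\partial D=\{p\in\mathbb Z^d:\min_{q\in D}\|q-p\|_{\ell^1}=1\}$; $E$ = unordered pairs $pq\subseteq D\cup\partial D$ with $\|p-q\|_{\ell^1}=1$, not both in $\partial D$; $\mathcal N(p)=\{q:pq\in E\}$; each $b\in\partial D$ has a unique neighbour $q_b\in D$. Conductivity $\gamma:E\to(0,\infty)$, symmetric. With $s(x)=\sum_ix_i$: $L_t=\{x\in D:s(x)=t\}$, $L_t^{\mathcal S}=\{x\in D:s(x)\le t\}$, $K_t^+=\{x\in\partial D:s(x)=t,\max_ix_i=n+1\}$, $K_t^-=\{x\in\partial D:s(x)=t,\min_ix_i=0\}$, $K_t^{\mathcal S\pm}=\bigcup_{\ell\le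 t}K_\ell^\pm$, $J_t^{\mathcal S}=K_t^{\mathcal S-}\cup K_{t+1}^{\mathcal S+}$. *)

From HB Require Import structures.
From mathcomp Require Import all_boot all_order all_algebra.
Set Implicit Arguments. Unset Strict Implicit. Unset Printing Implicit Defensive.
Import Order.TTheory GRing.Theory Num.Theory.

(* Lattice points of the box {0,...,n+1}^d, which contains D ∪ ∂D
   (all points relevant to the statement).  Coordinates are read as nats. *)
Definition pt (n d : nat) := {ffun 'I_d -> 'I_n.+2}.

Section Lattice.
Context {n d : nat}.
Implicit Types x y q : pt n d.

Definition l1 x y : nat := \sum_(i < d) ((x i - y i) + (y i - x i))%N.

Definition s x : nat := \sum_(i < d) (x i : nat).

Definition inD x : bool := [forall i, (1 <= x i <= n)%N].

Definition inBD x : bool :=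
  [exists q, inD q && (l1 q x == 1%N)] && [forall q, inD q ==> (1 <= l1 q x)%N].

(* E : pairs at l^1-distance 1 in D ∪ ∂D, not both in ∂D; N(x) = {q : xq ∈ E} *)
Definition edge x y : bool :=
  [&& l1 x y == 1%N, inD x || inBD x, inD y || inBD y & ~~ (inBD x && inBD y)].

Definition L (t : nat) x : bool := inD x && (s x == t).
Definition LS (t : nat) x : bool := inD x && (s x <= t)%N.
Definition Kp (t : nat) x : bool :=
  [&& inBD x, s x == t & \max_(i < d) (x i : nat) == n.+1].
Definition Km (t : nat) x : bool :=
  [&& inBD x, s x == t & \big[minn/n.+1]_(i < d) (x i : nat) == 0%N].
(* K^{S±}_t = ⋃_{l <= t} K^±_l *)
Definition KSp (t : nat) x : bool := Kp (s x) x && (s x <= t)%N.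
Definition KSm (t : nat) x : bool := Km (s x) x && (s x <= t)%N.
Definition JS (t : nat) x : bool := KSm t x || KSp t.+1 x.

Definition Mp (t : nat) (p : pt n d) x : bool := edge p x && (JS t.-1 x || LS t.-1 x).
End Lattice.

From HB Require Import structures.
From mathcomp Require Import all_boot all_order all_algebra.
From mathcomp Require Import zify.
Import Order.TTheory GRing.Theory Num.Theory.

(* The values of u are forced to 0 one point at a time.  A point q with a
   coordinate equal to 1 has a neighbour in J^S_{t-1}, and the flux condition
   there gives u_q = 0.  Otherwise r = q - e_m lies in L^S_{t-1}; if r is not in
   M_p and u already vanishes at r and at its other neighbours, the equation at
   r reduces to gam_rq u_q = 0.  Below level t the points are swept
   lexicographically in (s(q), q_1).  On level t every q <> p has q_k > p_k for
   some k; sweeping with a coordinate m <> k, by decreasing q_k and then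
   increasing q_m, keeps r = q - e_m away from p, so r is never in M_p. *)

Section Lattice.
Context {n d : nat}.
Implicit Types x y q r : pt n d.

Lemma l1C x y : l1 x y = l1 y x.
Proof. by apply: eq_bigr => i _; rewrite addnC. Qed.

Lemma leq_coord_l1 x y i : ((x i - y i) + (y i - x i) <= l1 x y)%N.
Proof. by rewrite /l1 (bigD1 i) //= leq_addr. Qed.

Lemma l1_single {x y i} : (forall j, j != i -> y j = x j) ->
  l1 x y = ((x i - y i) + (y i - x i))%N.
Proof.
by move=> eq_yx; rewrite /l1 (bigD1 i) //= big1 ?addn0 // => j /eq_yx ->; rewrite subnn.
Qed.

Lemma s_single {x y i} : (forall j, j != i -> y j = x j) -> (s y + x i = s x + y i)%N.
Proof.
move=> eq_yx; rewrite /s (bigD1 i) //= [in RHS](bigD1 i) //=.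
rewrite addnAC [in RHS]addnAC [(x i + _)%N]addnC; congr (_ + _).
by apply: eq_bigr => j /eq_yx ->.
Qed.

Lemma l1_eq1P x y : l1 x y = 1%N ->
  exists i, ((y i : nat) = (x i).+1 \/ (x i : nat) = (y i).+1) /\
            forall j, j != i -> y j = x j.
Proof.
move=> l1xy.
have [i diff_i] : exists i, (0 < (x i - y i) + (y i - x i))%N.
  apply/existsP; apply: contraT; rewrite negb_exists => /forallP eq_xy.
  by move: l1xy; rewrite /l1 big1 // => j _; apply/eqP; rewrite -leqn0 leqNgt eq_xy.
move: l1xy; rewrite /l1 (bigD1 i) //=; set rest := (X in (_ + X)%N) => l1xy.
have /eqP : rest = 0%N by lia.
rewrite /rest sum_nat_eq0 => /forallP eq_rest.
exists i; split=> [|j ji]; first lia.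
apply: val_inj => /=; move/implyP/(_ ji)/eqP: (eq_rest j); lia.
Qed.

Lemma inD_coord {x} i : inD x -> (1 <= x i <= n)%N.
Proof. by move/forallP. Qed.

Lemma inD_notBD {x} : inD x -> ~~ inBD x.
Proof.
move=> xD; apply/negP => /andP [_ /forallP /(_ x)]; rewrite xD /=.
by rewrite /l1 big1 // => i _; rewrite subnn.
Qed.

Lemma edge_to_inD x y : inD x || inBD x -> inD y -> l1 x y = 1%N -> edge x y.
Proof.
move=> xDB yD l1xy; rewrite /edge l1xy eqxx xDB yD /=.
by rewrite (negPf (inD_notBD yD)) andbF.
Qed.

Lemma JS_at_coord0 t y i : inBD y -> (y i : nat) = 0%N -> (s y <= t)%N -> JS t y.
Proof.
move=> yB yi0 syt; apply/orP; left.
rewrite /KSm syt andbT /Km yB eqxx /= -leqn0 -yi0 -minEnat -leEnat.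
exact: bigmin_le.
Qed.

Lemma JS_at_coord_max t y i : inBD y -> (y i : nat) = n.+1 -> (s y <= t.+1)%N -> JS t y.
Proof.
move=> yB yi_max syt; apply/orP; right.
rewrite /KSp syt andbT /Kp yB eqxx /= (bigD1 i) //= yi_max; apply/eqP/maxn_idPl.
by apply/bigmax_leqP => j _; rewrite -ltnS ltn_ord.
Qed.

Lemma JS_boundary_neighbour t r y :
  inD r -> (s r <= t)%N -> l1 r y = 1%N -> inBD y -> JS t y.
Proof.
move=> rD srt /l1_eq1P [i [yi eq_yr]] yB.
have syr := s_single eq_yr.
have yi_out : ~~ (1 <= y i <= n)%N.
  apply: contraL yB => yi_in; apply: inD_notBD; apply/forallP => j.
  by case: (eqVneq j i) => [-> // | /eq_yr ->]; apply: inD_coord.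
have := inD_coord i rD; case: yi => yi rij.
- by apply: (JS_at_coord_max t y i) => //; lia.
- by apply: (JS_at_coord0 t y i) => //; lia.
Qed.

Lemma exists_coord_lt x y : (s y <= s x)%N -> x != y -> exists k, (y k < x k)%N.
Proof.
move=> syx xy; apply/existsP; apply: contraNT xy => /existsPn no_lt.
apply/eqP/ffunP => k.
have x_le_y j : (x j <= y j)%N by rewrite leqNgt no_lt.
have : (\sum_j (y j - x j) == 0)%N by rewrite sumnB // subn_eq0.
rewrite sum_nat_eq0 => /forallP /(_ k); rewrite subn_eq0 => y_le_x.
by apply: val_inj; apply/eqP; rewrite eqn_leq x_le_y.
Qed.

Definition step_down x i : pt n d :=
  [ffun j => if j == i then inord (x i).-1 else x j].

Lemma step_down_at x i : (step_down x i i : nat) = (x i).-1.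
Proof. by rewrite ffunE eqxx inordK // ltnS (leq_trans (leq_pred _)) // -ltnS. Qed.

Lemma step_down_other x i j : j != i -> step_down x i j = x j.
Proof. by rewrite ffunE => /negPf ->. Qed.

Lemma s_step_down x i : (0 < x i)%N -> (s (step_down x i)).+1 = s x.
Proof.
have := s_single (step_down_other x i); rewrite step_down_at; lia.
Qed.

Lemma l1_step_down x i : (0 < x i)%N -> l1 (step_down x i) x = 1%N.
Proof.
by rewrite l1C (l1_single (step_down_other x i)) step_down_at; lia.
Qed.

Lemma inD_step_down x i : inD x -> (1 < x i)%N -> inD (step_down x i).
Proof.
move=> xD xi_gt1; apply/forallP => j; case: (eqVneq j i) => [-> | /step_down_other ->].
- by rewrite step_down_at; have := inD_coord i xD; lia.
- exact: inD_coord.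
Qed.

Lemma inBD_step_down x i : inD x -> (x i : nat) = 1%N -> inBD (step_down x i).
Proof.
move=> xD xi1; apply/andP; split.
  by apply/existsP; exists x; rewrite xD l1C l1_step_down ?xi1.
apply/forallP => z; apply/implyP => zD.
have := leq_coord_l1 z (step_down x i) i; have := inD_coord i zD.
rewrite step_down_at xi1; lia.
Qed.

Definition level_below_at q (m : 'I_d) y : Prop :=
  [/\ s y = s q, (y m < q m)%N & forall j, j != m -> (q j <= y j)%N].

Lemma step_down_neighbour q m y : (0 < q m)%N ->
  l1 (step_down q m) y = 1%N -> y != q -> (s y < s q)%N \/ level_below_at q m y.
Proof.
move=> qm_gt0 /l1_eq1P [i [yi eq_yr]] yq.
have syr := s_single eq_yr; have sqr := s_step_down q m qm_gt0.
have rm := step_down_at q m.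
case: yi => yi; last by left; lia.
have [im | mi] := eqVneq i m.
  subst i; case/eqP: yq; apply/ffunP => j; apply: val_inj => /=.
  have [-> | jm] := eqVneq j m; first by rewrite yi rm; lia.
  by rewrite eq_yr // step_down_other.
right; split; first lia.
- by rewrite eq_yr 1?eq_sym // rm; lia.
- move=> j jm; rewrite -(step_down_other q m j jm).
  have [-> | /eq_yr -> //] := eqVneq j i; lia.
Qed.

End Lattice.

Local Open Scope ring_scope.

Section Harmonic.
Context {R : realFieldType} {n d t : nat} {gam : pt n d -> pt n d -> R}.
Context {p : pt n d} {u : pt n d -> R}.
Hypothesis gam_gt0 : forall x y, edge x y -> 0 < gam x y.
Hypothesis p_level : L t p.
Hypothesis u_p : u p = 0.
Hypothesis u_harmonic : forall r, LS t.-1 r -> ~~ Mp t p r ->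
  \sum_(q | edge r q) gam r q * (u q - u r) = 0.
Hypothesis u_JS : forall b, JS t.-1 b -> u b = 0.
Hypothesis u_flux : forall b q, JS t.-1 b -> inD q -> edge b q ->
  gam b q * (u q - u b) = 0.
Hypothesis d_gt0 : (0 < d)%N.

Lemma u_eq0_at_coord1 q i : inD q -> (s q <= t)%N -> (q i : nat) = 1%N -> u q = 0.
Proof.
move=> qD sqt qi1; have qi_gt0 : (0 < q i)%N by rewrite qi1.
have bB := inBD_step_down q i qD qi1.
have bJ : JS t.-1 (step_down q i).
  apply: (JS_at_coord0 _ _ i bB); first by rewrite step_down_at qi1.
  by have := s_step_down q i qi_gt0; lia.
have bq : edge (step_down q i) q by apply: edge_to_inD; rewrite ?bB ?orbT ?l1_step_down.
have := u_flux _ _ bJ qD bq; rewrite (u_JS _ bJ) subr0 => /eqP.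
by rewrite mulf_eq0 (gt_eqF (gam_gt0 _ _ bq)) => /eqP.
Qed.

Lemma u_eq0_harmonic_step r q : LS t.-1 r -> ~~ Mp t p r -> inD q -> edge r q ->
  u r = 0 -> (forall y, edge r y -> inD y -> y != q -> u y = 0) -> u q = 0.
Proof.
move=> rLS rMp qD rq ur u_nbrs; have /andP [rD srt] := rLS.
have := u_harmonic _ rLS rMp; rewrite (bigD1 q) //= ur subr0 big1 ?addr0.
  by move/eqP; rewrite mulf_eq0 (gt_eqF (gam_gt0 _ _ rq)) => /eqP.
move=> y /andP [ry yq]; rewrite subr0.
have [yD | yND] := boolP (inD y); first by rewrite u_nbrs ?mulr0.
have /and4P [/eqP l1ry _ yDB _] := ry.
have yB : inBD y by rewrite (negPf yND) in yDB.
by rewrite u_JS ?mulr0 // (JS_boundary_neighbour _ _ _ rD srt).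
Qed.

(* Harmonicity at [r = q - e_m] forces [u q = 0] once [u] vanishes at the other
   neighbours of [r]; the hypothesis on [p] is what keeps [r] out of [M_p]. *)
Lemma u_eq0_sweep q m : inD q -> (s q <= t)%N -> ~ level_below_at q m p ->
  (forall y, inD y -> y != q -> (s y < s q)%N \/ level_below_at q m y -> u y = 0) ->
  u q = 0.
Proof.
move=> qD sqt p_not_below u_before.
have [-> // | qp] := eqVneq q p.
have qm_bounds := inD_coord m qD.
have [qm1 | qm_gt1] : (q m : nat) = 1%N \/ (1 < q m)%N by lia.
  exact: (u_eq0_at_coord1 q m).
have qm_gt0 : (0 < q m)%N by lia.
set r := step_down q m.
have rD : inD r := inD_step_down q m qD qm_gt1.
have srq : (s r).+1 = s q := s_step_down q m qm_gt0.
have rq : edge r q by apply: edge_to_inD; rewrite ?rD ?l1_step_down.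
have /andP [_ /eqP sp] := p_level.
apply: (u_eq0_harmonic_step r q) => //.
- by rewrite /LS rD /=; lia.
- apply/negP => /andP [/and4P [/eqP l1pr _ _ _] _].
  rewrite l1C in l1pr; have pq : p != q by rewrite eq_sym.
  by case: (step_down_neighbour q m p qm_gt0 l1pr pq) => //; lia.
- apply: u_before => //; last by left; lia.
  by apply/eqP => rq_eq; move: srq; rewrite rq_eq; lia.
- move=> y ry yD yq; apply: u_before => //.
  by apply: step_down_neighbour => //; case/and4P: ry => /eqP.
Qed.

Lemma u_eq0_below_level q : inD q -> (s q < t)%N -> u q = 0.
Proof.
pose i0 : 'I_d := Ordinal d_gt0.
have [N] := ubnP (s q * n.+2 + q i0)%N.
elim: N q => // N IH q measure_q qD sqt.
apply: (u_eq0_sweep q i0 qD (ltnW sqt)).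
  by have /andP [_ /eqP sp] := p_level; case; lia.
move=> y yD _ y_before; apply: IH => //; last by case: y_before => [|[]]; lia.
have := ltn_ord (y i0); case: y_before => [|[sy ?]]; nia.
Qed.

Lemma u_eq0_level k m q : m != k -> inD q -> s q = t -> (p k < q k)%N -> u q = 0.
Proof.
move=> mk; have km : k != m by rewrite eq_sym.
have [N] := ubnP ((n.+1 - q k) * n.+2 + q m)%N.
elim: N q => // N IH q measure_q qD sqt pk_lt.
apply: (u_eq0_sweep q m qD); first lia.
  by case=> _ _ /(_ k km); lia.
move=> y yD _ [sy | [sy ym q_le_y]]; first by apply: u_eq0_below_level; lia.
have qky := q_le_y k km.
apply: IH => //; try lia.
have := inD_coord k yD; have := inD_coord k qD; nia.
Qed.

End Harmonic.

Theorem lemma3p4 (R : realFieldType) (d n t : nat)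
  (gam : pt n d -> pt n d -> R) (p : pt n d) (u : pt n d -> R) :
  (2 <= d)%N -> (1 <= n)%N -> (d <= t <= d * n)%N ->
  (forall x y, edge x y -> 0 < gam x y) ->
  (forall x y, edge x y -> gam x y = gam y x) ->
  L t p ->
  u p = 0 ->
  (forall r, LS t.-1 r -> ~~ Mp t p r ->
     \sum_(q | edge r q) gam r q * (u q - u r) = 0) ->
  (forall b, JS t.-1 b -> u b = 0) ->
  (forall b q, JS t.-1 b -> inD q -> edge b q -> gam b q * (u q - u b) = 0) ->
  forall x, LS t x || JS t.-1 x -> u x = 0.
Proof.
move=> d_ge2 _ _ gam_gt0 _ p_level u_p u_harmonic u_JS u_flux x.
have d_gt0 : (0 < d)%N by apply: ltnW.
case/orP => [/andP [xD sxt] | /u_JS //].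
have [sx_lt | sx_ge] := ltnP (s x) t.
  exact: (u_eq0_below_level gam_gt0 p_level u_p u_harmonic u_JS u_flux d_gt0).
have [-> // | xp] := eqVneq x p.
have /andP [_ /eqP sp] := p_level.
have [k pk_lt] : exists k, (p k < x k)%N by apply: exists_coord_lt; lia.
have [m mk] : exists m : 'I_d, m != k.
  have [k0 | k_gt0] := posnP k.
    by exists (Ordinal d_ge2); rewrite -val_eqE /= k0.
  by exists (Ordinal d_gt0); rewrite -val_eqE /= eq_sym -lt0n.
apply: (u_eq0_level gam_gt0 p_level u_p u_harmonic u_JS u_flux d_gt0 _ _ _ mk) => //; lia.
Qed.
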